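(* Let $a_0,a_1,a_2,b_0,b_1$ be real numbers with $a_1\neq0$ and $a_2\neq0$, and let $(T(n,k))_{n\ge 0,\,k\in\mathbb{Z}}$ be defined by $T(0,0)=1$, $T(n,k)=0$ whenever $k<0$ or $k>n$, and \[ T(n,k)=(a_2n+a_1k+a_0)\,T(n-1,k)+(b_1k+b_0)\,T(n-1,k-1)\qquad(n\ge1). \] Then for all integers $0\le k\le n$, \[ T(n,k)=\frac{\prod_{i=1}^{k}(b_0+ib_1)}{a_1^k\,k!}\sum_{j=0}^{k}(-1)^{k-j}\binom{k}{j}\prod_{r=1}^{n}(a_0+a_1j+ra_2). \]
   Context: Empty products equal $1$. *)

From HB Require Import structures.
From mathcomp Require Import all_boot all_order all_algebra.
Set Implicit Arguments. Unset Strict Implicit. Unset Printing Implicit Defensive.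
Import Order.TTheory GRing.Theory Num.Theory.
Local Open Scope ring_scope.

(* The triangle T(n,k), for k a natural number (values at k < 0 are 0 by
   convention and only enter the recurrence through T(n-1,k-1) at k = 0). *)
Fixpoint Ttri (R : nzRingType) (a0 a1 a2 b0 b1 : R) (n k : nat) : R :=
  match n with
  | 0 => if k == 0%N then 1 else 0
  | n'.+1 =>
      (a2 * n%:R + a1 * k%:R + a0) * Ttri a0 a1 a2 b0 b1 n' k
      + match k with
        | 0 => 0
        | k'.+1 => (b1 * k%:R + b0) * Ttri a0 a1 a2 b0 b1 n' k'
        end
  end.

(* Write P_n(j) = prod_(r=1..n) (a0 + a1 j + r a2) and let D^k f be the k-th forward
   difference of f at 0, so the claim is T(n,k) = c_k D^k P_n.  Since
   P_(n+1)(j) = (a0 + (n+1) a2) P_n(j) + a1 j P_n(j), and differences satisfy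
   D^(k+1) (j f(j)) = (k+1) D^k f(j+1) = (k+1) (D^(k+1) f + D^k f), the right-hand
   side obeys the defining recurrence of T exactly when
   a1 (k+1) c_(k+1) = (b0 + (k+1) b1) c_k, which is how the c_k are chosen. *)
From HB Require Import structures.
From mathcomp Require Import all_boot all_order all_algebra.
From mathcomp Require Import ring.
Import Order.TTheory GRing.Theory Num.Theory.
Local Open Scope ring_scope.

Set Implicit Arguments. Unset Strict Implicit.

Section ForwardDifference.
Variable R : comPzRingType.

Definition fdiff (k : nat) (f : nat -> R) : R :=
  \sum_(j < k.+1) (-1) ^+ (k - j) * ('C(k, j))%:R * f j.

Lemma eq_fdiff k (f g : nat -> R) : f =1 g -> fdiff k f = fdiff k g.
Proof. by move=> fg; apply: eq_bigr => j _; rewrite fg. Qed.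

Lemma fdiffD k x y (f g : nat -> R) :
  fdiff k (fun j => x * f j + y * g j) = x * fdiff k f + y * fdiff k g.
Proof. by rewrite /fdiff !mulr_sumr -big_split; apply: eq_bigr => j _ /=; ring. Qed.

Lemma fdiff0 (f : nat -> R) : fdiff 0 f = f 0%N.
Proof. by rewrite /fdiff big_ord1 /= expr0 !mul1r. Qed.

Lemma fdiffS k (f : nat -> R) : fdiff k.+1 f = fdiff k (f \o S) - fdiff k f.
Proof.
rewrite /fdiff big_ord_recl /=.
under eq_bigr => j _ do rewrite /bump add1n subSS binS natrD mulrDr !mulrDl.
rewrite big_split /= addrA addrC; congr (_ + _).
have -> : - fdiff k f = \sum_(j < k.+1) (-1) ^+ (k.+1 - j) * ('C(k, j))%:R * f j.
  by rewrite -sumrN; apply: eq_bigr => j _; rewrite subSn ?leq_ord // exprS; ring.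
rewrite [RHS]big_ord_recl [X in _ + X = _]big_ord_recr /= !bin0.
by rewrite bin_small // mulr0n mulr0 mul0r addr0.
Qed.

Lemma fdiffS_mul_idx k (f : nat -> R) :
  fdiff k.+1 (fun j => j%:R * f j) = k.+1%:R * fdiff k (f \o S).
Proof.
rewrite /fdiff big_ord_recl mul0r mulr0 add0r mulr_sumr.
apply: eq_bigr => j _; rewrite lift0 subSS /=.
have /(congr1 (fun m => m%:R : R)) := mul_bin_diag k.+1 j.
rewrite !natrM /= => bin_diag.
transitivity ((-1) ^+ (k - j) * (j.+1%:R * 'C(k.+1, j.+1)%:R) * f j.+1); first by ring.
by rewrite -bin_diag; ring.
Qed.

Lemma fdiff_cst1 k : fdiff k (fun=> 1) = (k == 0%N)%:R.
Proof. by case: k => [|k]; rewrite ?fdiffS ?subrr // fdiff0. Qed.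

End ForwardDifference.

Section Triangle.
Variables (R : fieldType) (a0 a1 a2 b0 b1 : R).
Hypotheses (charR0 : has_pchar0 R) (a1_neq0 : a1 != 0).

Definition Tprod (n j : nat) : R :=
  \prod_(1 <= r < n.+1) (a0 + a1 * j%:R + r%:R * a2).

Definition Tcoef (k : nat) : R :=
  (\prod_(1 <= i < k.+1) (b0 + i%:R * b1)) / (a1 ^+ k * (k`!)%:R).

Lemma Tprod0 j : Tprod 0 j = 1.
Proof. by rewrite /Tprod big_geq. Qed.

Lemma TprodS n j :
  Tprod n.+1 j = (a0 + n.+1%:R * a2) * Tprod n j + a1 * (j%:R * Tprod n j).
Proof. by rewrite /Tprod big_nat_recr //=; ring. Qed.

Lemma Tcoef0 : Tcoef 0 = 1.
Proof. by rewrite /Tcoef big_geq // expr0 mul1r fact0 mul1r invr1. Qed.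

Lemma TcoefS k : Tcoef k.+1 * (a1 * k.+1%:R) = (b1 * k.+1%:R + b0) * Tcoef k.
Proof.
have nat_neq0 m : m.+1%:R != 0 :> R by rewrite (pcharf0P _).1.
have fact_neq0 : (k`!)%:R != 0 :> R by rewrite -(prednK (fact_gt0 k)).
rewrite /Tcoef big_nat_recr //= factS natrM exprS.
by field; rewrite fact_neq0 expf_neq0 // nat1r nat_neq0.
Qed.

Lemma Ttri_fdiff n k :
  Ttri a0 a1 a2 b0 b1 n k = Tcoef k * fdiff k (Tprod n).
Proof.
elim: n k => [|n IHn] k.
  rewrite (eq_fdiff _ Tprod0) fdiff_cst1.
  by case: k => [|k]; rewrite ?Tcoef0 ?mul1r ?mulr0.
rewrite /= (eq_fdiff _ (TprodS n)) fdiffD IHn.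
case: k => [|k]; first by rewrite !fdiff0 /=; ring.
rewrite IHn fdiffS_mul_idx fdiffS [_ * (Tcoef k * _)]mulrA -TcoefS; ring.
Qed.

End Triangle.

Theorem mainTheorem3 (R : realFieldType) (a0 a1 a2 b0 b1 : R)
  (ha1 : a1 != 0) (ha2 : a2 != 0) (n k : nat) (hkn : (k <= n)%N) :
  Ttri a0 a1 a2 b0 b1 n k =
    (\prod_(1 <= i < k.+1) (b0 + i%:R * b1)) / (a1 ^+ k * (k`!)%:R) *
    \sum_(0 <= j < k.+1)
      (-1) ^+ (k - j) * ('C(k, j))%:R *
      \prod_(1 <= r < n.+1) (a0 + a1 * j%:R + r%:R * a2).
Proof.
by rewrite big_mkord (Ttri_fdiff _ _ _ _ (pchar_num R) ha1).
Qed.
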